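(* Let $d>k\ge3$ and $a\ge1$ be integers with $d-a^k\ge1$. Let $X=X_\Sigma$ be the smooth projective toric $d$-fold whose fan has ray generators $x_1,\dots,x_d,y_1,y_2$ and primitive relations $x_1+\cdots+x_d=ay_1$ and $y_1+y_2=0$ (so $X\cong\mathbb{P}_{\mathbb{P}^{d-1}}(\mathcal{O}(a)\oplus\mathcal{O})$). Then: (1) if $k$ is odd, $\mathrm{ch}_k(X)$ is positive; (2) if $k$ is even, $\mathrm{ch}_k(X)$ is nef but not positive.
   Context: For a smooth complete toric variety $X$ of dimension $d$ with torus invariant prime divisors $D_1,\dots,D_n$, $\mathrm{ch}_k(X)=\frac{1}{k!}\sum_i D_i^k$. For $1\le k\le d$, $\mathrm{ch}_k(X)$ is nef (resp. positive) if $(\mathrm{ch}_k(X)\cdot Y)\ge0$ (resp. $>0$) for every $k$-dimensional torus invariant irreducible closed subvariety $Y\subset X$. A primitive collection is a set of ray generators not generating a cone of the fan while every proper subset does; its primitive relation expresses the sum of its elements as a positive integer combination of the generators of the smallest cone containing that sum. *)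

From HB Require Import structures.
From mathcomp Require Import all_boot all_order all_algebra.
Set Implicit Arguments. Unset Strict Implicit. Unset Printing Implicit Defensive.
Import Order.TTheory GRing.Theory Num.Theory.
Local Open Scope ring_scope.

(* A (simplicial) fan in N = Z^d with n rays is given by the ray generators *)
(* [gen i : 'I_d -> int] (i : 'I_n) and a predicate [cone] on subsets of    *)
(* rays (S is a cone of the fan iff cone S).  Torus-invariant prime         *)
(* divisors D_i correspond to rays.  A monomial D^m = prod_i D_i^(m i) is   *)
(* an exponent vector m : {ffun 'I_n -> nat}.                               *)

Definition supp (n : nat) (m : {ffun 'I_n -> nat}) : {set 'I_n} :=
  [set i | m i != 0%N].

Definition mdeg (n : nat) (m : {ffun 'I_n -> nat}) : nat := (\sum_i m i)%N.

(* m * D_i *)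
Definition mshift (n : nat) (m : {ffun 'I_n -> nat}) (i : 'I_n) : {ffun 'I_n -> nat} :=
  [ffun j => (m j + (j == i))%N].

(* the squarefree monomial prod_{j in S} D_j *)
Definition mind (n : nat) (S : {set 'I_n}) : {ffun 'I_n -> nat} :=
  [ffun j => nat_of_bool (j \in S)].

(* [deg] is the degree map A^d(X) -> Z (valued in Q) on top-degree monomials
   of the Chow ring  Z[D_1..D_n] / (Stanley-Reisner ideal + linear relations)
   of the smooth complete toric variety:
   - monomials whose support is not a cone vanish (Stanley--Reisner),
   - for every m of degree d-1 and u in the dual lattice M,
     sum_i <u, v_i> deg (m D_i) = 0 (linear equivalence),
   - the product of the d distinct divisors of a maximal (smooth) cone is 1. *)
Definition is_degree_map (n d : nat) (gen : 'I_n -> 'I_d -> int)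
    (cone : {set 'I_n} -> bool) (deg : {ffun 'I_n -> nat} -> rat) : Prop :=
  [/\ (forall m, mdeg m = d -> ~~ cone (supp m) -> deg m = 0),
      (forall m (u : 'I_d -> int), (mdeg m).+1 = d ->
          \sum_i ((\sum_j u j * gen i j) %:~R) * deg (mshift m i) = 0)
    & (forall S, cone S -> #|S| = d -> deg (mind S) = 1)].

(* (ch_k(X) . V(S)) = (1/k!) sum_i (D_i^k . prod_{j in S} D_j), where V(S) is
   the torus-invariant subvariety attached to the cone S. *)
Definition ch_dot (n : nat) (deg : {ffun 'I_n -> nat} -> rat) (k : nat)
    (S : {set 'I_n}) : rat :=
  (k`!%:R)^-1 * \sum_i deg [ffun j => (k * (j == i) + (j \in S))%N].

(* k-dimensional torus-invariant irreducible closed subvarieties are the V(S)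
   for the cones S of dimension d - k. *)
Definition ch_nef (n d : nat) (cone : {set 'I_n} -> bool)
    (deg : {ffun 'I_n -> nat} -> rat) (k : nat) : Prop :=
  forall S, cone S -> (#|S| + k)%N = d -> 0 <= ch_dot deg k S.

Definition ch_positive (n d : nat) (cone : {set 'I_n} -> bool)
    (deg : {ffun 'I_n -> nat} -> rat) (k : nat) : Prop :=
  forall S, cone S -> (#|S| + k)%N = d -> 0 < ch_dot deg k S.

(* Rays indexed by 'I_(d+2): i < d is x_(i+1), i = d is y_1, i = d+1 is y_2. *)
(* In N = Z^d (basis e_0..e_(d-1)):                                         *)
(*   x_(i+1) = e_i (i < d-1),  x_d = -(e_0+...+e_(d-2)) + a e_(d-1),        *)
(*   y_1 = e_(d-1),  y_2 = -e_(d-1),                                        *)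
(* so that x_1+...+x_d = a y_1 and y_1 + y_2 = 0.                           *)
(* The cones are the subsets containing neither primitive collection        *)
(* {x_1,...,x_d} nor {y_1,y_2}.                                             *)

Definition Xgen (d a : nat) (i : 'I_d.+2) (j : 'I_d) : int :=
  if (i < d.-1)%N then ((nat_of_ord i == nat_of_ord j) : nat)%:Z
  else if nat_of_ord i == d.-1 then
         (if (j < d.-1)%N then -1 else a%:Z)
  else if nat_of_ord i == d then ((nat_of_ord j == d.-1) : nat)%:Z
  else - ((nat_of_ord j == d.-1) : nat)%:Z.

Definition Xcone (d : nat) (S : {set 'I_d.+2}) : bool :=
  ~~ ([set i : 'I_d.+2 | (i < d)%N] \subset S) &&
  ~~ ([set i : 'I_d.+2 | (d <= i)%N] \subset S).

From HB Require Import structures.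
From mathcomp Require Import all_boot all_order all_algebra.
From mathcomp Require Import zify ring lra.
Import Order.TTheory GRing.Theory Num.Theory.
Local Open Scope ring_scope.

(* Write d = e+1; the rays are x_1..x_e (indices i < e), x_d (index e), y_1
   and y_2 (indices e+1, e+2).  We compute the degree map on top-degree
   monomials explicitly, which both shows that it is unique and exhibits it.
   - The linear relation for the coordinate u = e_j, j < e, says that a top
     monomial keeps its degree when one factor x_j is replaced by x_d; so,
     by induction on the x_1..x_e-weight, deg(m) only depends on the
     exponents (p, q) of y_1 and y_2.  The linear relation for u = e_(d-1),
     a D_(x_d) + D_(y_1) - D_(y_2) = 0, gives a recurrence in (p, q); with
     the Stanley-Reisner vanishing (p, q > 0, or p = q = 0) and the
     normalisation on the two cones {x_1..x_e, y_i} it forces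
     deg = top_deg (p, q) := (-a)^(p-1), a^(q-1) or 0.
   - Conversely top_deg satisfies the three axioms of a degree map.
   - Summing top_deg over the d+2 rays yields a closed formula for
     (ch_k . V(S)) depending only on which of y_1, y_2 lie in S; its sign
     analysis gives positivity for odd k (using a^k < d) and nefness with
     a zero value (on a cone avoiding y_1, y_2) for even k. *)

Lemma sum_indicator (T : finType) (P : pred T) (i : T) :
  (\sum_(j | P j) ((j == i) : nat))%N = P i.
Proof.
case Pi: (P i).
  by rewrite (bigD1 i) //= eqxx big1 // => j /andP [_ /negbTE ->].
by rewrite big1 // => j Pj; case: eqP => // ji; move: Pj; rewrite ji Pi.
Qed.

Lemma exprN_parity (R : pzRingType) (x : R) (n : nat) :
  (- x) ^+ n = if odd n then - x ^+ n else x ^+ n.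
Proof. by rewrite exprNn -signr_odd; case: (odd n); rewrite ?mulN1r ?mul1r. Qed.

Section ProjectiveBundle.
Variables (e a : nat).

Local Notation ray := 'I_e.+3.
Local Notation mon := {ffun ray -> nat}.

Definition isdeg (deg : mon -> rat) : Prop :=
  is_degree_map (@Xgen e.+1 a) (@Xcone e.+1) deg.

Definition xray (i : 'I_e) : ray := widen_ord (ltnW (ltnW (ltnW (ltnSn e.+2)))) i.
Definition xlast : ray := Ordinal (ltnW (ltnW (ltnSn e.+2))).
Definition y1 : ray := Ordinal (ltnW (ltnSn e.+2)).
Definition y2 : ray := Ordinal (ltnSn e.+2).

Lemma ray_cases (i : ray) : [\/ (i < e)%N, i = xlast, i = y1 | i = y2].
Proof.
case: (ltnP i e) => [|hi]; first by constructor 1.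
have : i = e :> nat \/ i = e.+1 :> nat \/ i = e.+2 :> nat by have := ltn_ord i; lia.
by case=> [h|[h|h]]; [constructor 2 | constructor 3 | constructor 4]; apply: val_inj.
Qed.

Lemma xlast_neq (i : ray) : (i < e)%N -> (xlast == i) = false.
Proof. by move=> hi; rewrite -val_eqE /=; lia. Qed.
Lemma y1_neq (i : ray) : (i < e)%N -> (y1 == i) = false.
Proof. by move=> hi; rewrite -val_eqE /=; lia. Qed.
Lemma y2_neq (i : ray) : (i < e)%N -> (y2 == i) = false.
Proof. by move=> hi; rewrite -val_eqE /=; lia. Qed.
Lemma y1_xlast : (y1 == xlast) = false. Proof. by rewrite -val_eqE /=; lia. Qed.
Lemma y2_xlast : (y2 == xlast) = false. Proof. by rewrite -val_eqE /=; lia. Qed.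
Lemma y1_y2 : (y1 == y2) = false. Proof. by rewrite -val_eqE /=; lia. Qed.
Lemma y2_y1 : (y2 == y1) = false. Proof. by rewrite -val_eqE /=; lia. Qed.

Lemma ray_y (i : ray) : (e.+1 <= i)%N -> i = y1 \/ i = y2.
Proof. by case: (ray_cases i) => [|->|->|->] /=; try lia; [left | right]. Qed.

Lemma card_ray_lt (c : nat) : (c <= e.+3)%N -> #|[set i : ray | (i < c)%N]| = c.
Proof.
move=> hc; have -> : [set i : ray | (i < c)%N] = widen_ord hc @: [set: 'I_c].
  apply/setP => i; rewrite inE; apply/idP/imsetP => [hi|[j _ ->]].
    by exists (Ordinal hi) => //; apply: val_inj.
  exact: (ltn_ord j).
by rewrite card_imset ?cardsT ?card_ord // => x y /(congr1 val) /= /val_inj.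
Qed.

Definition xweight (m : mon) : nat := (\sum_(i < e) m (xray i))%N.

(* The monomial x_d^h y_1^p y_2^q. *)
Definition ymon (h p q : nat) : mon :=
  [ffun j : ray => if (j < e)%N then 0%N else if val j == e then h
     else if val j == e.+1 then p else q].

Lemma ymon_xlast h p q : ymon h p q xlast = h. Proof. by rewrite ffunE /= ltnn eqxx. Qed.
Lemma ymon_y1 h p q : ymon h p q y1 = p.
Proof. by rewrite ffunE /= ltnNge leqnSn /= (gtn_eqF (ltnSn e)) eqxx. Qed.
Lemma ymon_y2 h p q : ymon h p q y2 = q.
Proof.
by rewrite ffunE /= ltnNge !leqW //= (gtn_eqF (leqW (ltnSn e))) (gtn_eqF (ltnSn e.+1)).
Qed.
Lemma xweight_ymon h p q : xweight (ymon h p q) = 0%N.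
Proof. by rewrite /xweight big1 // => i _; rewrite ffunE /= ltn_ord. Qed.

Lemma mshiftE (m : mon) i j : mshift m i j = (m j + (j == i))%N.
Proof. by rewrite ffunE. Qed.

Lemma mdeg_split (m : mon) : mdeg m = (xweight m + m xlast + m y1 + m y2)%N.
Proof.
rewrite /mdeg !big_ord_recr /=.
by congr (_ + _ + _ + _)%N; [apply: eq_bigr => i _ | ..]; congr (m _); apply: val_inj.
Qed.

Lemma mdeg_ymon h p q : mdeg (ymon h p q) = (h + p + q)%N.
Proof. by rewrite mdeg_split xweight_ymon ymon_xlast ymon_y1 ymon_y2. Qed.

Lemma mdeg_mshift (m : mon) i : mdeg (mshift m i) = (mdeg m).+1.
Proof.
rewrite /mdeg; under eq_bigr do rewrite ffunE.
by rewrite big_split /= (sum_indicator _ xpredT) addn1.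
Qed.

Lemma xweight_mshift (m : mon) (i : ray) : xweight (mshift m i) = (xweight m + (i < e))%N.
Proof.
rewrite /xweight; under eq_bigr do rewrite ffunE.
rewrite big_split /=; congr (_ + _)%N.
case: (ltnP i e) => hi.
  transitivity (\sum_(j < e) ((j == Ordinal hi) : nat))%N.
    by apply: eq_bigr => j _; rewrite -!val_eqE.
  by rewrite (sum_indicator _ xpredT).
by rewrite big1 // => j _; apply/eqP; rewrite eqb0 -val_eqE /=; have := ltn_ord j; lia.
Qed.

Lemma mdeg_mind (S : {set ray}) : mdeg (mind S) = #|S|.
Proof.
rewrite /mdeg -sum1_card [RHS]big_mkcond /=; apply: eq_bigr => i _.
by rewrite ffunE; case: (i \in S).
Qed.

Lemma sum_Xgen (F : ray -> rat) (j : 'I_e.+1) :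
  \sum_(i < e.+3) ((Xgen a i j)%:~R * F i) =
  if (j < e)%N then F (inord j) - F xlast else a%:R * F xlast + F y1 - F y2.
Proof.
rewrite !big_ord_recr /= /Xgen /=.
have -> : widen_ord (leqnSn e.+2) (widen_ord (leqnSn e.+1) (@ord_max e)) = xlast by apply: val_inj.
have -> : widen_ord (leqnSn e.+2) (@ord_max e.+1) = y1 by apply: val_inj.
have -> : @ord_max e.+2 = y2 by apply: val_inj.
have -> : (e.+1 < e)%N = false by lia.
have -> : (e.+2 < e)%N = false by lia.
rewrite ltnn eqxx (gtn_eqF (ltnSn e)) (gtn_eqF (leqW (ltnSn e))) (gtn_eqF (ltnSn e.+1)) eqxx.
under eq_bigr => i _ do rewrite ltn_ord.
case: (ltnP j e) => hj.
  rewrite (ltn_eqF hj) (bigD1 (Ordinal hj)) //= eqxx big1; last first.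
    move=> i hi; rewrite (_ : (val i == val j) = false) ?mulr0n ?mul0r //.
    by apply/negbTE; apply: contra hi => /eqP h; apply/eqP/val_inj.
  have -> : widen_ord (leqnSn e.+2) (widen_ord (leqnSn e.+1) (widen_ord (leqnSn e) (Ordinal hj)))
      = inord j :> ray.
    by apply: val_inj; rewrite /= inordK //; lia.
  by rewrite mul1r mul0r oppr0 mul0r !addr0 mulN1r.
have -> : (j : nat) = e by have := ltn_ord j; lia.
rewrite eqxx big1 ?add0r => [|i _]; last by rewrite (ltn_eqF (ltn_ord i)) mul0r.
by rewrite mul1r mulN1r.
Qed.

Lemma linear_relation deg (m : mon) (j : 'I_e.+1) : isdeg deg -> mdeg m = e ->
  \sum_(i < e.+3) ((Xgen a i j)%:~R * deg (mshift m i)) = 0.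
Proof.
move=> [_ hlin _] hm.
have delta i : \sum_(j' < e.+1) (((j' == j) : nat)%:Z * Xgen a i j') = Xgen a i j.
  by rewrite (bigD1 j) //= eqxx mul1r big1 ?addr0 // => j' /negbTE ->; rewrite mul0r.
have := hlin m (fun j' => ((j' == j) : nat)%:Z); rewrite hm => /(_ erefl).
by under eq_bigr => i _ do rewrite delta.
Qed.

Lemma relation_x deg (m : mon) (i : ray) : isdeg deg -> mdeg m = e -> (i < e)%N ->
  deg (mshift m i) = deg (mshift m xlast).
Proof.
move=> hdeg hm hi; have hj : (i < e.+1)%N by lia.
have := linear_relation deg m (Ordinal hj) hdeg hm; rewrite sum_Xgen /= hi.
have -> : inord i = i by apply: val_inj; rewrite /= inordK //; lia.
by move/eqP; rewrite subr_eq0 => /eqP.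
Qed.

Lemma relation_y deg (m : mon) : isdeg deg -> mdeg m = e ->
  a%:R * deg (mshift m xlast) + deg (mshift m y1) - deg (mshift m y2) = 0.
Proof.
by move=> hdeg hm; have := linear_relation deg m ord_max hdeg hm; rewrite sum_Xgen /= ltnn.
Qed.

Lemma ymon_of_xweight0 (m : mon) : xweight m = 0%N -> m = ymon (m xlast) (m y1) (m y2).
Proof.
move=> hw; apply/ffunP => j.
case: (ray_cases j) => [hj|->|->|->]; rewrite ?ymon_xlast ?ymon_y1 ?ymon_y2 //.
rewrite ffunE hj; move/eqP: hw; rewrite sum_nat_eq0 => /forallP /(_ (Ordinal hj)) /eqP.
by rewrite (_ : xray _ = j) //; apply: val_inj.
Qed.

Lemma collapse deg (m : mon) : isdeg deg -> mdeg m = e.+1 ->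
  deg m = deg (ymon (m xlast + xweight m) (m y1) (m y2)).
Proof.
move=> hdeg; move hN : (xweight m) => N; elim: N m hN => [|N IH] m hw hm.
  by rewrite addn0 {1}(ymon_of_xweight0 m hw).
case: (pickP (fun k : 'I_e => 0 < m (xray k))%N) => [k hk|hnone]; last first.
  by move: hw; rewrite /xweight big1 // => k; move/negbT: (hnone k); rewrite lt0n negbK => /eqP.
pose m' : mon := [ffun i => if i == xray k then (m i).-1 else m i].
have hmm' : mshift m' (xray k) = m.
  apply/ffunP => i; rewrite !ffunE; case: eqP => [->|]; last by rewrite addn0.
  by rewrite addn1 prednK.
have hk' : (xray k < e)%N by rewrite /= ltn_ord.
have hdm' : mdeg m' = e by have := mdeg_mshift m' (xray k); rewrite hmm' hm => -[].
pose m'' := mshift m' xlast.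
have -> : deg m = deg m'' by rewrite -{1}hmm' (relation_x deg m' (xray k) hdeg hdm' hk').
have hw' : xweight m' = N by apply/eq_add_S; rewrite -hw -hmm' xweight_mshift hk' addn1.
have hw'' : xweight m'' = N by rewrite /m'' xweight_mshift /= ltnn addn0.
have hdm'' : mdeg m'' = e.+1 by rewrite mdeg_mshift hdm'.
rewrite (IH m'' hw'' hdm'').
rewrite /m'' /m' !mshiftE eqxx y1_xlast y2_xlast.
by rewrite !ffunE (xlast_neq _ hk') (y1_neq _ hk') (y2_neq _ hk') !addn0 addn1 addSnnS.
Qed.

Definition ydeg (deg : mon -> rat) (p q : nat) : rat := deg (ymon (e.+1 - p - q) p q).

Lemma deg_ydeg deg (m : mon) : isdeg deg -> mdeg m = e.+1 -> deg m = ydeg deg (m y1) (m y2).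
Proof.
move=> hdeg hm; rewrite (collapse deg m hdeg hm) /ydeg; congr (deg (ymon _ _ _)).
by have := mdeg_split m; rewrite hm; lia.
Qed.

Lemma deg_y1y2 deg (m : mon) : isdeg deg -> mdeg m = e.+1 ->
  (0 < m y1)%N -> (0 < m y2)%N -> deg m = 0.
Proof.
move=> [hsr _ _] hm h1 h2; apply: hsr => //; rewrite /Xcone negb_and !negbK; apply/orP; right.
by apply/subsetP => i; rewrite !inE -lt0n => /ray_y [] ->.
Qed.

(* Stanley-Reisner: the product of all the x_i has degree 0. *)
Lemma ydeg00 deg : isdeg deg -> ydeg deg 0 0 = 0.
Proof.
move=> hdeg; pose X := [set i : ray | (i < e.+1)%N].
have hX : mdeg (mind X) = e.+1 by rewrite mdeg_mind card_ray_lt //; lia.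
have := deg_ydeg deg (mind X) hdeg hX; rewrite !ffunE !inE /= ltnn ltnNge leqnSn /= => <-.
case: hdeg => hsr _ _; apply: hsr => //.
rewrite /Xcone negb_and !negbK; apply/orP; left; apply/subsetP => i hi.
by rewrite inE ffunE hi.
Qed.

(* x_1..x_e and one y of y_1, y_2 span a maximal cone, whose product has degree 1. *)
Lemma ydeg_max_cone deg (y : ray) : isdeg deg -> (e < y)%N -> ydeg deg (y1 == y) (y2 == y) = 1.
Proof.
move=> hdeg hy; pose S := y |: [set i : ray | (i < e)%N].
have hcard : #|S| = e.+1 by rewrite cardsU1 card_ray_lt ?inE; lia.
have hcone : Xcone S.
  rewrite /Xcone; apply/andP; split; apply/negP => /subsetP hsub.
    by move: (hsub xlast); rewrite !inE -val_eqE /=; lia.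
  by move: (hsub y1) (hsub y2); rewrite !inE -!val_eqE /=; have := ltn_ord y; lia.
have <- : deg (mind S) = 1 by case: hdeg => _ _; apply.
rewrite (deg_ydeg deg (mind S) hdeg) ?mdeg_mind // !ffunE !inE.
have /= -> : (y1 < e)%N = false by rewrite /=; lia.
have /= -> : (y2 < e)%N = false by rewrite /=; lia.
by rewrite !orbF.
Qed.

Lemma ydeg_rec deg p q : isdeg deg -> (p + q <= e)%N ->
  a%:R * ydeg deg p q + ydeg deg p.+1 q - ydeg deg p q.+1 = 0.
Proof.
move=> hdeg hpq; pose m := ymon (e - p - q) p q.
have hm : mdeg m = e by rewrite mdeg_ymon; lia.
have := relation_y deg m hdeg hm.
rewrite !(deg_ydeg deg (mshift m _) hdeg) ?mdeg_mshift ?hm //.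
by rewrite !mshiftE !ymon_y1 !ymon_y2 y1_xlast y2_xlast !eqxx y1_y2 y2_y1 /= !addn0 !addn1.
Qed.

Definition top_deg (p q : nat) : rat :=
  if (0 < p)%N && (0 < q)%N then 0 else if (0 < p)%N then (- a%:R) ^+ p.-1
  else if (0 < q)%N then a%:R ^+ q.-1 else 0.

Lemma top_deg_rec p q : a%:R * top_deg p q + top_deg p.+1 q - top_deg p q.+1 = 0.
Proof. by rewrite /top_deg /=; case: p => [|p]; case: q => [|q] /=; rewrite ?exprS; ring. Qed.

Lemma ydeg_y1y2 deg p q : isdeg deg -> (0 < p)%N -> (0 < q)%N -> (p + q <= e.+1)%N ->
  ydeg deg p q = 0.
Proof.
move=> hdeg hp hq hpq; apply: (deg_y1y2 deg _ hdeg); rewrite ?ymon_y1 ?ymon_y2 //.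
by rewrite mdeg_ymon; lia.
Qed.

Lemma ydeg_top_deg deg p q : isdeg deg -> (p + q <= e.+1)%N -> ydeg deg p q = top_deg p q.
Proof.
move=> hdeg; case: p => [|p]; case: q => [|q] hpq.
- exact: ydeg00.
- elim: q hpq => [|q IH] hpq.
    by have := ydeg_max_cone deg y2 hdeg (leqW (ltnSn e)); rewrite y1_y2 eqxx.
  have := ydeg_rec deg 0 q.+1 hdeg ltac:(lia).
  rewrite IH ?(ydeg_y1y2 deg 1 q.+1 hdeg) //; try lia.
  by rewrite addr0 => /eqP; rewrite subr_eq0 => /eqP <-; rewrite /top_deg /= exprS.
- elim: p hpq => [|p IH] hpq.
    by have := ydeg_max_cone deg y1 hdeg (ltnSn e); rewrite y2_y1 eqxx.
  have := ydeg_rec deg p.+1 0 hdeg ltac:(lia).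
  rewrite IH ?(ydeg_y1y2 deg p.+1 1 hdeg) //; try lia.
  by rewrite subr0 addrC => /eqP; rewrite addr_eq0 => /eqP ->; rewrite /top_deg /= exprS mulNr.
- by rewrite ydeg_y1y2.
Qed.

Lemma deg_top_deg deg (m : mon) : isdeg deg -> mdeg m = e.+1 -> deg m = top_deg (m y1) (m y2).
Proof.
move=> hdeg hm; rewrite (deg_ydeg deg m hdeg hm) ydeg_top_deg //.
by have := mdeg_split m; rewrite hm; lia.
Qed.

Definition top_deg_map (m : mon) : rat := top_deg (m y1) (m y2).

(* Stanley-Reisner: a non-cone support contains {x_1..x_d}, leaving no room for y_1,
   y_2 in a top monomial, or contains {y_1, y_2}. *)
Lemma top_deg_map_vanishing (m : mon) :
  mdeg m = e.+1 -> ~~ Xcone (supp m) -> top_deg_map m = 0.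
Proof.
move=> hm; rewrite /Xcone negb_and !negbK => /orP [/subsetP hX|/subsetP hY].
  have hxlast : (0 < m xlast)%N by have := hX xlast; rewrite !inE /= ltnSn lt0n; apply.
  have hw : (e <= xweight m)%N.
    have : (\sum_(i < e) 1 <= xweight m)%N.
      apply: leq_sum => i _; have := hX (xray i); rewrite !inE /= lt0n.
      by apply; exact: (ltnW (ltn_ord i)).
    by rewrite sum_nat_const card_ord muln1.
  have := mdeg_split m; rewrite hm /top_deg_map => hsplit.
  have -> : m y1 = 0%N by lia.
  by have -> : m y2 = 0%N by lia.
have := hY y1; have := hY y2; rewrite !inE /= /top_deg_map /top_deg !lt0n.
by move=> /(_ (leqW (ltnSn e))) -> /(_ (ltnSn e)) ->.
Qed.

(* Linear relations: reduce to coordinate vectors, where they become top_deg_rec. *)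
Lemma top_deg_map_linear (m : mon) (u : 'I_e.+1 -> int) :
  \sum_i ((\sum_j u j * Xgen a i j)%:~R) * top_deg_map (mshift m i) = 0.
Proof.
under eq_bigr => i _ do rewrite rmorph_sum mulr_suml.
rewrite exchange_big /=; apply: big1 => j _.
under eq_bigr => i _ do rewrite intrM -mulrA.
rewrite -mulr_sumr (sum_Xgen (fun i => top_deg_map (mshift m i))).
case: ifP => hj; rewrite /top_deg_map !mshiftE y1_xlast y2_xlast.
  have hj' : ((inord j : ray) < e)%N by rewrite inordK //; lia.
  by rewrite (y1_neq _ hj') (y2_neq _ hj') subrr mulr0.
by rewrite !eqxx y1_y2 y2_y1 /= !addn0 !addn1 top_deg_rec mulr0.
Qed.

(* Normalisation: a maximal cone contains exactly one of y_1, y_2, since the only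
   d-subset of {x_1..x_d} is the primitive collection itself. *)
Lemma top_deg_map_normalized (S : {set ray}) :
  Xcone S -> #|S| = e.+1 -> top_deg_map (mind S) = 1.
Proof.
rewrite /Xcone /top_deg_map !ffunE => /andP [hX hY] hcard.
case h1: (y1 \in S); case h2: (y2 \in S) => //.
  by case/negP: hY; apply/subsetP => i; rewrite inE => /ray_y [] ->.
pose X := [set i : ray | (i < e.+1)%N].
have sub : S \subset X.
  apply/subsetP => i hi; rewrite inE ltnNge; apply/negP => /ray_y [] hi'.
    by move: hi; rewrite hi' h1.
  by move: hi; rewrite hi' h2.
have := (subset_leqif_cards sub).2; rewrite hcard card_ray_lt; last by lia.
by rewrite eqxx => /esym /eqP hSX; case/negP: hX; rewrite hSX; apply/subsetP.
Qed.

Lemma top_deg_map_is_degree_map : isdeg top_deg_map.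
Proof.
split=> [m hm|m u _|S]; [exact: top_deg_map_vanishing | exact: top_deg_map_linear |].
exact: top_deg_map_normalized.
Qed.

Lemma ch_sum deg k (S : {set ray}) : isdeg deg -> (#|S| + k)%N = e.+1 ->
  \sum_i deg [ffun j => (k * (j == i) + (j \in S))%N] =
  (e.+1)%:R * top_deg (y1 \in S) (y2 \in S) + top_deg (k + (y1 \in S)) (y2 \in S)
    + top_deg (y1 \in S) (k + (y2 \in S)).
Proof.
move=> hdeg hSk.
have hm i : mdeg [ffun j => (k * (j == i) + (j \in S))%N] = e.+1.
  rewrite -[in RHS]hSk -mdeg_mind /mdeg; under eq_bigr do rewrite ffunE.
  rewrite big_split /= -big_distrr /= (sum_indicator _ xpredT) muln1 addnC; congr (_ + _)%N.
  by apply: eq_bigr => j _; rewrite ffunE.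
under eq_bigr => i _ do rewrite (deg_top_deg deg _ hdeg (hm i)) !ffunE.
rewrite big_ord_recr /= big_ord_recr /=.
have -> : widen_ord (leqnSn e.+2) (@ord_max e.+1) = y1 by apply: val_inj.
have -> : @ord_max e.+2 = y2 by apply: val_inj.
rewrite !eqxx y1_y2 y2_y1 !muln0 !muln1 !add0n; congr (_ + _ + _).
rewrite (eq_bigr (fun _ => top_deg (y1 \in S) (y2 \in S))) ?sumr_const ?card_ord ?mulr_natl //.
move=> i _; rewrite -!val_eqE /=.
by rewrite (@gtn_eqF i e.+1 (ltn_ord i)) (@gtn_eqF i e.+2 (leqW (ltn_ord i))) !muln0.
Qed.

Lemma ch_dot_formula deg k (S : {set ray}) : isdeg deg -> (0 < k)%N ->
  Xcone S -> (#|S| + k)%N = e.+1 ->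
  ch_dot deg k S = (k`!%:R)^-1 *
    (if y1 \in S then (e.+1)%:R + (- a%:R) ^+ k
     else if y2 \in S then (e.+1)%:R + a%:R ^+ k
     else (- a%:R) ^+ k.-1 + a%:R ^+ k.-1).
Proof.
move=> hdeg hk /andP [_ hY] hSk; rewrite /ch_dot (ch_sum deg k S hdeg hSk); congr (_ * _).
case: k hk hSk => [//|k] _ _.
case h1: (y1 \in S); case h2: (y2 \in S) => /=.
- by case/negP: hY; apply/subsetP => i; rewrite inE => /ray_y [] ->.
- by rewrite /top_deg /= addn1 /= mulr1 addr0.
- by rewrite /top_deg /= addn1 /= mulr1 addr0.
- by rewrite /top_deg /= addn0 mulr0 add0r.
Qed.

Lemma cone_initial_x (c : nat) : (c <= e)%N -> Xcone [set i : ray | (i < c)%N].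
Proof.
move=> hc; rewrite /Xcone; apply/andP; split; apply/negP => /subsetP hsub.
  by have := hsub xlast; rewrite !inE /= ltnSn => /(_ isT); lia.
by have := hsub y1; rewrite !inE /= ltnSn => /(_ isT); lia.
Qed.

End ProjectiveBundle.

Theorem proposition4p2 (d k a : nat) :
  (3 <= k)%N -> (k < d)%N -> (1 <= a)%N -> (a ^ k < d)%N ->
  (exists deg, is_degree_map (@Xgen d a) (@Xcone d) deg) /\
  (forall deg, is_degree_map (@Xgen d a) (@Xcone d) deg ->
     (odd k -> ch_positive d (@Xcone d) deg k) /\
     (~~ odd k -> ch_nef d (@Xcone d) deg k /\ ~ ch_positive d (@Xcone d) deg k)).
Proof.
case: d k => [|e] [|p] // _ hpd ha hap.
split; first by exists (top_deg_map e a); exact: top_deg_map_is_degree_map.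
move=> deg hdeg; have ch_dotE := ch_dot_formula e a deg p.+1 _ hdeg isT.
have fact_pos : 0 < ((p.+1)`!%:R : rat)^-1 by rewrite invr_gt0 ltr0n fact_gt0.
have apow_pos n : 0 < (a%:R : rat) ^+ n by rewrite exprn_gt0 // ltr0n.
have apow_lt : (a%:R : rat) ^+ p.+1 < (e.+1)%:R by rewrite -natrX ltr_nat.
have apow_p := apow_pos p; have apow_p1 := apow_pos p.+1.
split=> [/= p_even S hS hSk | /= /negbNE p_odd].
  (* k = p+1 odd: the values d - a^k, d + a^k and 2 a^p are positive *)
  rewrite ch_dotE // !exprN_parity /= (negbTE p_even) /=; apply: mulr_gt0 => //.
  by case: ifP => _; [|case: ifP => _]; lra.
(* k = p+1 even: the values are d + a^k, d + a^k and 0 *)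
split=> [S hS hSk | ch_pos].
  rewrite ch_dotE // !exprN_parity /= p_odd /=; apply: mulr_ge0; first exact: ltW.
  by case: ifP => _; [|case: ifP => _]; lra.
(* the zero value is attained on the cone spanned by x_1..x_(d-k) *)
pose S0 := [set i : 'I_e.+3 | (i < e.+1 - p.+1)%N].
have hS0 : Xcone S0 by apply: cone_initial_x; lia.
have hcard : (#|S0| + p.+1)%N = e.+1 by rewrite card_ray_lt; lia.
have := ch_pos S0 hS0 hcard; rewrite ch_dotE // !inE /= ifF ?ifF; try lia.
by rewrite exprN_parity p_odd /= addNr mulr0 ltxx.
Qed.
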